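(* Let $G$ be a Garside group with Garside monoid $M$ (so $M\subset G$). For every $a\in G$, the centralizer $Z(a)=\{c\in G:\ ca=ac\}$ is generated (as a group) by elements of $M$, i.e. $Z(a)$ is generated by $Z(a)\cap M$.
   Context: A monoid $M$ is atomic if it is generated by its atoms (elements $x\neq 1$ such that $x=yz$ implies $y=1$ or $z=1$) and for every $a\in M$ there is $N_a>0$ such that $a$ is not a product of more than $N_a$ atoms. A Garside monoid is an atomic, left and right cancellative monoid in which every pair of elements has left and right least common multiples and greatest common divisors, and which has a Garside element $\Delta$: an element whose left divisors coincide with its right divisors, form a finite set, and generate $M$. A Garside group is the group of fractions $G$ of a Garside monoid $M$; $M$ embeds in $G$ and its elements are called positive. (It is known that some power $\Delta^k$, $k\geq 1$, is central in $G$, and every element of $G$ can be multiplied by a suitable power of $\Delta^{k}$ to become positive.) *)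

From Stdlib Require Import List.
Import ListNotations.

Record Group := {
  carrier :> Type;
  gmul : carrier -> carrier -> carrier;
  gone : carrier;
  ginv : carrier -> carrier;
  gmulA : forall x y z, gmul x (gmul y z) = gmul (gmul x y) z;
  gmul1l : forall x, gmul gone x = x;
  gmul1r : forall x, gmul x gone = x;
  gmulVl : forall x, gmul (ginv x) x = gone;
  gmulVr : forall x, gmul x (ginv x) = gone
}.

Set Implicit Arguments.
Unset Strict Implicit.

Section Defs.
Variable G : Group.
Local Infix "**" := (gmul G) (at level 40, left associativity).
Local Notation e := (gone G).

Definition lprod (l : list G) : G := fold_right (fun x acc => x ** acc) e l.

Definition submonoid (M : G -> Prop) : Prop :=
  M e /\ forall x y, M x -> M y -> M (x ** y).

Definition ldiv (M : G -> Prop) (x y : G) : Prop :=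
  M x /\ M y /\ exists z, M z /\ y = x ** z.
Definition rdiv (M : G -> Prop) (x y : G) : Prop :=
  M x /\ M y /\ exists z, M z /\ y = z ** x.

Definition atom (M : G -> Prop) (x : G) : Prop :=
  M x /\ x <> e /\ forall y z, M y -> M z -> x = y ** z -> y = e \/ z = e.

Definition atomic (M : G -> Prop) : Prop :=
  (forall a, M a -> exists l, Forall (atom M) l /\ lprod l = a) /\
  (forall a, M a -> exists N : nat, N > 0 /\
     forall l, Forall (atom M) l -> lprod l = a -> length l <= N).

Definition is_lcm (d : G -> G -> Prop) (a b m : G) : Prop :=
  d a m /\ d b m /\ forall n, d a n -> d b n -> d m n.
Definition is_gcd (d : G -> G -> Prop) (a b g : G) : Prop :=
  d g a /\ d g b /\ forall h, d h a -> d h b -> d h g.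

Definition garside_element (M : G -> Prop) (D : G) : Prop :=
  M D /\
  (forall x, ldiv M x D <-> rdiv M x D) /\
  (exists l : list G, forall x, ldiv M x D -> In x l) /\
  (forall a, M a -> exists l, Forall (fun x => ldiv M x D) l /\ lprod l = a).

(** Group of fractions: the inclusion M -> G has the universal property
    (every monoid morphism M -> H into a group extends uniquely to a
    group morphism G -> H). *)
Definition group_of_fractions (M : G -> Prop) : Prop :=
  forall (H : Group) (f : G -> H),
    f e = gone H ->
    (forall x y, M x -> M y -> f (x ** y) = gmul H (f x) (f y)) ->
    (exists g : G -> H,
        (forall x y, g (x ** y) = gmul H (g x) (g y)) /\
        (forall x, M x -> g x = f x)) /\
    (forall g1 g2 : G -> H,
        (forall x y, g1 (x ** y) = gmul H (g1 x) (g1 y)) ->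
        (forall x y, g2 (x ** y) = gmul H (g2 x) (g2 y)) ->
        (forall x, M x -> g1 x = f x) -> (forall x, M x -> g2 x = f x) ->
        forall x, g1 x = g2 x).

(** (G, M) is a Garside group with Garside monoid M embedded in G.
    Cancellativity of M is automatic since M is a subset of the group G. *)
Definition garside_group (M : G -> Prop) : Prop :=
  submonoid M /\
  atomic M /\
  (forall a b, M a -> M b ->
     (exists m, is_lcm (ldiv M) a b m) /\ (exists m, is_lcm (rdiv M) a b m) /\
     (exists g, is_gcd (ldiv M) a b g) /\ (exists g, is_gcd (rdiv M) a b g)) /\
  (exists D, garside_element M D) /\
  group_of_fractions M.

Inductive gen (S : G -> Prop) : G -> Prop :=
| gen_in : forall x, S x -> gen S x
| gen_one : gen S e
| gen_mul : forall x y, gen S x -> gen S y -> gen S (x ** y)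
| gen_inv : forall x, gen S x -> gen S (ginv G x).

Definition centralizer (a : G) : G -> Prop := fun c => c ** a = a ** c.

End Defs.

From Stdlib Require Import List Arith Lia Classical ClassicalEpsilon ProofIrrelevance.

Set Implicit Arguments.

(* Conjugation by the Garside element [D] permutes the finite set
   of divisors of [D], so some power [D^K] commutes with all of them; as they
   generate [M] and [M] generates [G], [D^K] is central.  Every positive element
   left-divides a power of [D], hence of [D^K], and this lets one multiply any
   [x] in [G] by a power of [D^K] to make it positive.  So an element [c] of
   [Z(a)] factors as [(c D^{Kn}) (D^{Kn})^-1] with both factors positive and
   in [Z(a)]. *)

Local Infix "**" := (gmul _) (at level 40, left associativity).
Local Notation inv := (ginv _).

Section GroupTheory.
Context {G : Group}.
Local Notation e := (gone G).

Lemma mul_cancel_l (a x y : G) : a ** x = a ** y -> x = y.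
Proof.
  intros H. rewrite <- (gmul1l G x), <- (gmul1l G y), <- (gmulVl G a).
  rewrite <- !gmulA, H. reflexivity.
Qed.

Lemma mul_cancel_r (a x y : G) : x ** a = y ** a -> x = y.
Proof.
  intros H. rewrite <- (gmul1r G x), <- (gmul1r G y), <- (gmulVr G a).
  rewrite !gmulA, H. reflexivity.
Qed.

Lemma mulgK (x y : G) : x ** y ** inv y = x.
Proof. rewrite <- gmulA, gmulVr, gmul1r. reflexivity. Qed.

Lemma centralizer_sym (a x : G) : centralizer a x -> centralizer x a.
Proof. unfold centralizer. auto. Qed.

Lemma centralizer_one (a : G) : centralizer a e.
Proof. unfold centralizer. rewrite gmul1l, gmul1r. reflexivity. Qed.

Lemma centralizer_mul (a x y : G) :
  centralizer a x -> centralizer a y -> centralizer a (x ** y).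
Proof.
  unfold centralizer. intros Hx Hy.
  rewrite <- gmulA, Hy, gmulA, Hx, gmulA. reflexivity.
Qed.

Lemma centralizer_inv (a x : G) : centralizer a x -> centralizer a (inv x).
Proof.
  unfold centralizer. intros Hx.
  transitivity (inv x ** (a ** x) ** inv x).
  - rewrite gmulA, mulgK. reflexivity.
  - rewrite <- Hx, gmulA, gmulVl, gmul1l. reflexivity.
Qed.

Lemma gen_centralizer (S : G -> Prop) (a : G) :
  (forall x, S x -> centralizer a x) -> forall x, gen S x -> centralizer a x.
Proof.
  intros HS x Hx. induction Hx.
  - auto.
  - apply centralizer_one.
  - apply centralizer_mul; assumption.
  - apply centralizer_inv; assumption.
Qed.

Lemma gen_lprod (S : G -> Prop) (l : list G) : Forall S l -> gen S (lprod l).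
Proof.
  induction 1; simpl.
  - apply gen_one.
  - apply gen_mul; [apply gen_in |]; assumption.
Qed.

Definition central (z : G) : Prop := forall x, centralizer z x.

Fixpoint gpow (x : G) (n : nat) : G :=
  match n with 0 => e | S n => gpow x n ** x end.

Lemma gpow_add (x : G) m n : gpow x (m + n) = gpow x m ** gpow x n.
Proof.
  induction n as [| n IH]; simpl.
  - rewrite Nat.add_0_r, gmul1r. reflexivity.
  - rewrite Nat.add_succ_r. simpl. rewrite IH, gmulA. reflexivity.
Qed.

Lemma gpow_mul (x : G) m n : gpow x (m * n) = gpow (gpow x m) n.
Proof.
  induction n as [| n IH]; simpl.
  - rewrite Nat.mul_0_r. reflexivity.
  - rewrite Nat.mul_succ_r, gpow_add, IH. reflexivity.
Qed.

Lemma centralizer_gpow (a x : G) n : centralizer a x -> centralizer a (gpow x n).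
Proof.
  intros Hx. induction n; simpl.
  - apply centralizer_one.
  - apply centralizer_mul; assumption.
Qed.

Lemma submonoid_gpow (M : G -> Prop) (x : G) n :
  submonoid M -> M x -> M (gpow x n).
Proof. intros [M1 Mmul] Hx. induction n; simpl; auto. Qed.

Definition conjg (d x : G) : G := inv d ** x ** d.

Lemma conjg_inj (d x y : G) : conjg d x = conjg d y -> x = y.
Proof. unfold conjg. intros H. apply (mul_cancel_l (inv d)), (mul_cancel_r d), H. Qed.

Lemma gpow_iter_conjg (d x : G) n : gpow d n ** Nat.iter n (conjg d) x = x ** gpow d n.
Proof.
  induction n as [| n IH]; simpl.
  - rewrite gmul1l, gmul1r. reflexivity.
  - unfold conjg at 1. rewrite !gmulA, mulgK, IH. reflexivity.
Qed.

End GroupTheory.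

Section GroupOfFractions.
Context {G : Group} (M : G -> Prop).

Lemma sig_eq (P : G -> Prop) (u v : {x | P x}) : proj1_sig u = proj1_sig v -> u = v.
Proof. destruct u, v; simpl; intros ->. f_equal. apply proof_irrelevance. Qed.

Definition gen_group : Group.
Proof.
  refine {| carrier := {x : G | gen M x};
            gmul := fun x y => exist _ (proj1_sig x ** proj1_sig y)
                                   (gen_mul (proj2_sig x) (proj2_sig y));
            gone := exist _ (gone G) (gen_one M);
            ginv := fun x => exist _ (inv (proj1_sig x)) (gen_inv (proj2_sig x)) |};
  intros; apply sig_eq; simpl.
  - apply gmulA.
  - apply gmul1l.
  - apply gmul1r.
  - apply gmulVl.
  - apply gmulVr.
Defined.

(* The corestriction of the inclusion [M -> gen M] extends to a morphism
   [g : G -> gen_group]; by uniqueness [proj1_sig \o g] is the identity. *)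
Lemma fractions_gen : group_of_fractions M -> forall x, gen M x.
Proof.
  intros Hfr.
  set (f := fun x : G => match excluded_middle_informative (gen M x) with
              | left p => (exist _ x p : gen_group) | right _ => gone gen_group end).
  assert (Hf : forall x, gen M x -> proj1_sig (f x) = x).
  { intros x Hx. unfold f. destruct (excluded_middle_informative (gen M x)).
    - reflexivity.
    - contradiction. }
  destruct (Hfr gen_group f) as [[g [g_mul g_M]] _].
  - apply sig_eq, Hf, gen_one.
  - intros x y Hx Hy. apply sig_eq. simpl.
    rewrite !Hf; auto using gen_in, gen_mul.
  - intros x.
    destruct (Hfr G (fun x => x) eq_refl (fun _ _ _ _ => eq_refl)) as [_ uniq].
    rewrite (uniq (fun x => x) (fun x => proj1_sig (g x))).
    + apply (proj2_sig (g x)).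
    + reflexivity.
    + intros y z. rewrite g_mul. reflexivity.
    + reflexivity.
    + intros y Hy. rewrite g_M, Hf; auto using gen_in.
Qed.

End GroupOfFractions.

Lemma pigeonhole_seq (A : Type) (u : nat -> A) (l : list A) :
  (forall i, In (u i) l) -> exists i j, i < j /\ u i = u j.
Proof.
  intros Hu. apply NNPP. intros Hno.
  assert (Hinj : NoDup (map u (seq 0 (S (length l))))).
  { apply NoDup_map_NoDup_ForallPairs; [| apply seq_NoDup].
    intros i j _ _ Hij.
    destruct (Nat.lt_trichotomy i j) as [Hlt | [Heq | Hgt]]; auto.
    - destruct Hno. eauto.
    - destruct Hno. eauto. }
  apply NoDup_incl_length with (l' := l) in Hinj.
  - rewrite length_map, length_seq in Hinj. lia.
  - intros x Hx. apply in_map_iff in Hx as [i [<- _]]. apply Hu.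
Qed.

Section FiniteOrbits.
Context {A : Type} {f : A -> A} {P : A -> Prop} {enumP : list A}.
Hypothesis f_inj : forall x y, f x = f y -> x = y.
Hypothesis f_stable : forall x, P x -> P (f x).
Hypothesis enumP_spec : forall x, P x -> In x enumP.

Lemma iter_inj n x y : Nat.iter n f x = Nat.iter n f y -> x = y.
Proof. induction n; simpl; auto. Qed.

Lemma iter_stable n x : P x -> P (Nat.iter n f x).
Proof. induction n; simpl; auto. Qed.

Lemma iter_period x : P x -> exists p, 0 < p /\ Nat.iter p f x = x.
Proof.
  intros Px.
  destruct (pigeonhole_seq (fun i => Nat.iter i f x) enumP) as [i [j [Hij Eij]]].
  { intros i. apply enumP_spec, iter_stable, Px. }
  exists (j - i). split; [lia |].
  apply (iter_inj i). rewrite <- Nat.iter_add.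
  replace (i + (j - i)) with j by lia. auto.
Qed.

Lemma iter_period_mul p q x : Nat.iter p f x = x -> Nat.iter (p * q) f x = x.
Proof.
  intros Hp. induction q as [| q IH].
  - rewrite Nat.mul_0_r. reflexivity.
  - rewrite Nat.mul_succ_r, Nat.iter_add, Hp. exact IH.
Qed.

Lemma iter_common_period : exists K, 0 < K /\ forall x, P x -> Nat.iter K f x = x.
Proof.
  enough (H : forall l, exists K, 0 < K /\ forall x, In x l -> P x -> Nat.iter K f x = x).
  { destruct (H enumP) as [K [K_pos HK]]. eauto. }
  induction l as [| y l [K [K_pos HK]]].
  - exists 1. split; [lia | intros x []].
  - destruct (classic (P y)) as [Py | nPy].
    + destruct (iter_period Py) as [p [p_pos Hp]].
      exists (K * p). split; [nia |].
      intros x [<- | Hx] Px.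
      * rewrite Nat.mul_comm. apply iter_period_mul, Hp.
      * apply iter_period_mul, HK; assumption.
    + exists K. split; [assumption |].
      intros x [<- | Hx] Px; [contradiction | auto].
Qed.

End FiniteOrbits.

Lemma gpow_shift_positive (G : Group) (M : G -> Prop) (z : G) :
  submonoid M -> (forall x, gen M x) -> central z -> M z ->
  (forall m, M m -> exists n u, M u /\ m ** u = gpow z n) ->
  forall x, exists n, M (x ** gpow z n).
Proof.
  intros M_sub M_gen z_central Mz M_div x.
  pose proof M_sub as [M1 Mmul].
  induction (M_gen x) as [x Mx | | x y _ [n Hx] _ [m Hy] | x _ [n Hx]].
  - exists 0. simpl. rewrite gmul1r. exact Mx.
  - exists 0. simpl. rewrite gmul1r. exact M1.
  - exists (n + m).
    assert (Hc : centralizer y (gpow z n))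
      by apply centralizer_gpow, centralizer_sym, z_central.
    assert (E : x ** y ** gpow z (n + m) = x ** gpow z n ** (y ** gpow z m)).
    { unfold centralizer in Hc.
      rewrite gpow_add, !gmulA, <- (gmulA _ x y), <- Hc, !gmulA. reflexivity. }
    rewrite E. auto.
  - destruct (M_div _ Hx) as [p [u [Mu Eu]]].
    exists p. rewrite <- Eu, !gmulA, gmulVl, gmul1l.
    apply Mmul; [apply submonoid_gpow |]; assumption.
Qed.

Section GarsideElement.
Context {G : Group} {M : G -> Prop} {D : G}.
Hypothesis M_submonoid : submonoid M.
Hypothesis D_garside : garside_element M D.

(* If [D = s t] then [t] also left-divides [D], say [D = t r], and [s^D = r]. *)
Lemma conjg_divisor s : ldiv M s D -> ldiv M (conjg D s) D.
Proof.
  destruct D_garside as [MD [D_lr _]].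
  intros [Ms [_ [t [Mt Dst]]]].
  assert (Ht : ldiv M t D) by (apply D_lr; repeat split; eauto).
  destruct Ht as [_ [_ [r [Mr Dtr]]]].
  assert (Er : conjg D s = r).
  { apply (mul_cancel_l D). unfold conjg.
    rewrite !gmulA, gmulVr, gmul1l, Dtr at 1.
    rewrite gmulA, <- Dst. reflexivity. }
  rewrite Er. apply D_lr. repeat split; eauto.
Qed.

Lemma gpow_central : group_of_fractions M -> exists K, 0 < K /\ central (gpow D K).
Proof.
  intros M_fractions. destruct D_garside as [_ [_ [[l Hl] D_gen]]].
  destruct (iter_common_period (conjg_inj D) conjg_divisor Hl) as [K [K_pos HK]].
  exists K. split; [assumption |].
  assert (Zs : forall s, ldiv M s D -> centralizer (gpow D K) s).
  { intros s Hs. unfold centralizer.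
    rewrite <- (gpow_iter_conjg D s K), HK by assumption. reflexivity. }
  assert (Zm : forall m, M m -> centralizer (gpow D K) m).
  { intros m Hm. destruct (D_gen m Hm) as [l' [Hl' <-]].
    apply (gen_centralizer Zs), gen_lprod, Hl'. }
  intros x. apply (gen_centralizer Zm), fractions_gen, M_fractions.
Qed.

Lemma ldiv_gpow m : M m -> exists n u, M u /\ m ** u = gpow D n.
Proof.
  destruct D_garside as [_ [_ [_ D_gen]]]. destruct M_submonoid as [M1 Mmul].
  intros Hm. destruct (D_gen m Hm) as [l [Hl <-]]. clear Hm.
  induction Hl as [| s l Hs _ [n [u [Mu Eu]]]].
  - exists 0, (gone G). split; [exact M1 | apply gmul1l].
  - destruct (iter_stable conjg_divisor n _ Hs) as [_ [_ [w [Mw Ew]]]].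
    exists (S n), (u ** w). split; [auto |].
    change (s ** lprod l ** (u ** w) = gpow D n ** D).
    transitivity (gpow D n ** (Nat.iter n (conjg D) s ** w)).
    + rewrite (gmulA _ (gpow D n)), gpow_iter_conjg, <- Eu, !gmulA. reflexivity.
    + rewrite <- Ew. reflexivity.
Qed.

Lemma ldiv_gpow_gpow K :
  0 < K -> forall m, M m -> exists n u, M u /\ m ** u = gpow (gpow D K) n.
Proof.
  destruct D_garside as [MD _]. destruct M_submonoid as [_ Mmul].
  intros K_pos m Hm. destruct (ldiv_gpow Hm) as [n [u [Mu Eu]]].
  exists n, (u ** gpow D (K * n - n)). split.
  - apply Mmul, submonoid_gpow; assumption.
  - rewrite <- gpow_mul, gmulA, Eu, <- gpow_add. f_equal. nia.
Qed.

End GarsideElement.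

Theorem lemma3p1 (G : Group) (M : G -> Prop) :
  garside_group M ->
  forall a c : G,
    centralizer a c <-> gen (fun x => M x /\ centralizer a x) c.
Proof.
  intros [M_sub [_ [_ [[D D_garside] M_fractions]]]] a c. split.
  - intros Hc.
    destruct (gpow_central D_garside M_fractions) as [K [K_pos z_central]].
    set (z := gpow D K) in *.
    assert (Mz : M z) by (apply submonoid_gpow; [exact M_sub | exact (proj1 D_garside)]).
    destruct (gpow_shift_positive M_sub (fractions_gen M_fractions) z_central Mz
                (ldiv_gpow_gpow M_sub D_garside K_pos) c) as [n Mcz].
    assert (Zz : centralizer a (gpow z n))
      by apply centralizer_gpow, centralizer_sym, z_central.
    assert (Mzn : M (gpow z n)) by (apply submonoid_gpow; assumption).
    rewrite <- (mulgK c (gpow z n)).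
    apply gen_mul; [apply gen_in | apply gen_inv, gen_in]; split; auto.
    apply centralizer_mul; assumption.
  - apply gen_centralizer. intros x [_ Hx]. exact Hx.
Qed.
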